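(* If $G$ is an optimal digraph on $n$ vertices, then $\beta_G < n/2$.
   Context: Digraphs are finite, loopless, with at most one edge $uv$ per ordered pair. A digraph is $2$-free if no distinct $u,v$ have both $uv,vu$ as edges. A circular interval digraph is a digraph together with a fixed arrangement of its vertices in a circle such that for all distinct $u,v,w$ in clockwise order with $uw\in E(G)$, also $uv,vw\in E(G)$. For distinct $u,v$, $d(u,v) = 1 + |\{w: u,w,v \text{ distinct, in clockwise order}\}|$; this is the length of the ordered pair $uv$. A non-edge is an ordered pair $(u,v)$ of distinct vertices with neither $uv$ nor $vu$ an edge; its length is $d(u,v)$. $\alpha_G$ is the minimum length of a non-edge ($\infty$ if there is none) and $\beta_G$ the maximum length of an edge ($0$ if there is none). $\xi(G)$ is the number of pairs $(uv,(w,x))$ with $uv\in E(G)$, $(w,x)$ a non-edge, and $d(u,v)>d(w,x)$. $\tilde P_3(G)$ is the number of triples $(a,b,c)$ of distinct vertices with $ab,bc\in E(G)$ and $ac,ca\notin E(G)$. For fixed $n\ge 4$, $G$ is optimal if it is a $2$-free circular interval digraph on $n$ vertices that maximizes $\tilde P_3$ among all $2$-free circular interval digraphs on $n$ vertices and, subject to this, minimizes $\xi(G)$. *)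

From mathcomp Require Import all_boot all_order.
Set Implicit Arguments. Unset Strict Implicit. Unset Printing Implicit Defensive.

(* Vertices of a digraph on n vertices are 'I_n; the fixed circular
   arrangement is the cyclic order 0, 1, ..., n-1 (clockwise).
   A digraph is a relation E : rel 'I_n (E u v = "uv is an edge"). *)

Section Circ.
Variable n : nat.
Implicit Types (E : rel 'I_n) (u v w : 'I_n).

(* d(u,v) = 1 + #{w : u,w,v distinct in clockwise order} = (v - u) mod n *)
Definition cdist u v : nat := (v + n - u) %% n.

Definition clockwise u v w : bool :=
  [&& u != v, v != w, u != w & cdist u v < cdist u w].

Definition loopless E : Prop := forall u, ~~ E u u.

Definition two_free E : Prop := forall u v, u != v -> ~~ (E u v && E v u).

Definition circ_interval E : Prop :=
  forall u v w, clockwise u v w -> E u w -> E u v && E v w.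

Definition admissible E : Prop := [/\ loopless E, two_free E & circ_interval E].

Definition nonedge E u v : bool := [&& u != v, ~~ E u v & ~~ E v u].

(* beta_G : maximum length of an edge, 0 if none *)
Definition beta E : nat := \max_(p : 'I_n * 'I_n | E p.1 p.2) cdist p.1 p.2.

Definition xi E : nat :=
  #|[pred q : ('I_n * 'I_n) * ('I_n * 'I_n) |
      [&& E q.1.1 q.1.2, nonedge E q.2.1 q.2.2 &
          cdist q.2.1 q.2.2 < cdist q.1.1 q.1.2]]|.

Definition P3t E : nat :=
  #|[pred t : 'I_n * 'I_n * 'I_n |
      [&& [&& t.1.1 != t.1.2, t.1.2 != t.2 & t.1.1 != t.2],
          E t.1.1 t.1.2, E t.1.2 t.2, ~~ E t.1.1 t.2 & ~~ E t.2 t.1.1]]|.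

Definition optimal E : Prop :=
  [/\ admissible E,
      (forall E', admissible E' -> P3t E' <= P3t E) &
      (forall E', admissible E' -> P3t E' = P3t E -> xi E <= xi E')].
End Circ.

From mathcomp Require Import all_boot all_order.
From mathcomp Require Import zify.
Set Implicit Arguments. Unset Strict Implicit. Unset Printing Implicit Defensive.

(* Let uw be a longest edge of an optimal digraph G, of length k = beta_G,
   and suppose n <= 2k.  Deleting uw keeps G a 2-free circular interval
   digraph.  Every induced 2-path destroyed by the deletion has the form
   u -> w -> o or o -> u -> w with o beyond w, at distance d(u,o) > k; it is
   traded injectively for the new induced path u -> v -> w where v is the
   vertex at distance d(u,o) - k < n - k <= k from u.  Hence P3 does not
   decrease.  If n < 2k the path through the vertex just before w is not a
   trade, so P3 strictly increases, contradicting optimality.  If n = 2k,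
   the vertex x just after w either gives the new path w -> x -> u (again
   not a trade), or one of (w,x), (x,u) is a non-edge shorter than uw; then
   P3 is unchanged while xi strictly drops, since the new non-edges (u,w)
   and (w,u) are as long as every edge. *)

Section CyclicDistance.
Variable n : nat.
Implicit Types u v w x y : 'I_n.

Lemma cdistE u v : cdist u v = if u <= v then v - u else v + n - u.
Proof.
rewrite /cdist; have hu := ltn_ord u; have hv := ltn_ord v.
case: leqP => uv; last by rewrite modn_small //; lia.
have -> : v + n - u = (v - u) + n by lia.
by rewrite modnDr modn_small //; lia.
Qed.

Lemma cdist_lt u v : cdist u v < n.
Proof. rewrite cdistE; have := ltn_ord u; have := ltn_ord v; case: (leqP u v) => *; lia. Qed.

Lemma cdist_eq0 u v : (cdist u v == 0) = (u == v).
Proof.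
apply/eqP/eqP => [|->]; last by rewrite cdistE leqnn subnn.
rewrite cdistE; have := ltn_ord u; have := ltn_ord v.
by case: (leqP u v) => uv hv hu d0; apply/val_inj => /=; lia.
Qed.

Lemma cdist_gt0 u v : (0 < cdist u v) = (u != v).
Proof. by rewrite lt0n cdist_eq0. Qed.

Lemma cdist_inj u x y : cdist u x = cdist u y -> x = y.
Proof.
rewrite !cdistE; have := ltn_ord u; have := ltn_ord x; have := ltn_ord y.
by move=> hy hx hu; case: (leqP u x) => ?; case: (leqP u y) => ? ?; apply/val_inj => /=; lia.
Qed.

Lemma cdist_add x v z :
  cdist x v + cdist v z = cdist x z \/ cdist x v + cdist v z = cdist x z + n.
Proof.
rewrite !cdistE; have := ltn_ord x; have := ltn_ord v; have := ltn_ord z.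
by move=> hz hv hx; case: (leqP x v) => ?; case: (leqP v z) => ?; case: (leqP x z) => ?; lia.
Qed.

Lemma cdist_opp u v : u != v -> cdist u v + cdist v u = n.
Proof.
move=> uv; have {uv} : nat_of_ord u <> v by move/val_inj => e; rewrite e eqxx in uv.
rewrite !cdistE.
by have := ltn_ord u; have := ltn_ord v; case: (leqP u v) => ?; case: (leqP v u) => ?; lia.
Qed.

Definition shift u (j : nat) : 'I_n :=
  Ordinal (ltn_pmod (u + j) (leq_ltn_trans (leq0n u) (ltn_ord u))).

Lemma cdist_shift u j : j < n -> cdist u (shift u j) = j.
Proof.
move=> jn; rewrite cdistE /=; have hu := ltn_ord u.
case: (leqP n (u + j)) => wrap; last by rewrite modn_small //; case: (leqP u (u + j)) => ?; lia.
have -> : u + j = (u + j - n) + n by lia.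
by rewrite modnDr modn_small; [case: leqP => ?; lia | lia].
Qed.

End CyclicDistance.

Section InjectiveComparison.
Variables (T : finType) (P Q : pred T) (f : T -> T).
Hypothesis f_inj : {in [predD P & Q] &, injective f}.
Hypothesis f_into : {in [predD P & Q], forall t, f t \in [predD Q & P]}.

Let card_common : #|[predI P & Q]| = #|[predI Q & P]|.
Proof. by apply: eq_card => t; rewrite !inE andbC. Qed.

Let image_sub : image f [predD P & Q] \subset [predD Q & P].
Proof. by apply/subsetP => _ /imageP[t Pt ->]; apply: f_into. Qed.

Lemma card_le_by_injection : #|P| <= #|Q|.
Proof.
rewrite -(cardID Q P) -(cardID P Q) card_common leq_add2l.
by rewrite -(card_in_image f_inj) subset_leq_card.
Qed.

Lemma card_lt_by_injection y :
  y \in [predD Q & P] -> (forall t, t \in [predD P & Q] -> f t != y) -> #|P| < #|Q|.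
Proof.
move=> Qy fy; rewrite -(cardID Q P) -(cardID P Q) card_common ltn_add2l.
rewrite -(card_in_image f_inj); apply: proper_card; apply/properP; split => //.
by exists y => //; apply/imageP => -[t Pt e]; move: (fy t Pt); rewrite e eqxx.
Qed.
End InjectiveComparison.

Section Digraphs.
Variable n : nat.
Implicit Types (E : rel 'I_n) (u v w x y z : 'I_n).

Lemma interior_adjacent E u v w :
  circ_interval E -> E u w -> 0 < cdist u v < cdist u w -> E u v && E v w.
Proof.
move=> ci Euw /andP[uv vw]; apply: ci => //; apply/and4P; split => //.
- by rewrite -cdist_gt0.
- by apply: contraTneq vw => ->; rewrite ltnn.
- by rewrite -cdist_gt0 (leq_ltn_trans _ vw).
Qed.

Definition longest_edge E u w : Prop :=
  E u w /\ forall x y, E x y -> cdist x y <= cdist u w.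

Lemma longest_edge_exists E :
  beta E = 0 \/ exists u w, longest_edge E u w /\ beta E = cdist u w.
Proof.
pose F (p : 'I_n * 'I_n) := cdist p.1 p.2.
case: (pickP [pred p : 'I_n * 'I_n | E p.1 p.2]) => [p0 Ep0|none].
  have [|[u w] /= Euw eq_beta] := @eq_bigmax_cond _ [pred p | E p.1 p.2] F.
    by apply/card_gt0P; exists p0.
  right; exists u, w; split => //; split => // x y Exy.
  by rewrite -/(F (u, w)) -eq_beta (@leq_bigmax_cond _ _ F (x, y)).
by left; rewrite /beta big_pred0.
Qed.

Definition remove_edge E u w : rel 'I_n := fun x y => E x y && ~~ ((x == u) && (y == w)).

(* Deleting a longest edge keeps the digraph a 2-free circular interval
   digraph: no remaining edge can contain the deleted one strictly inside. *)
Lemma remove_longest_admissible E u w :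
  admissible E -> longest_edge E u w -> admissible (remove_edge E u w).
Proof.
case=> ll tf ci [Euw longest]; split.
- by move=> x; rewrite /remove_edge (negbTE (ll x)).
- move=> x y xy; apply/negP => /andP[/andP[Exy _] /andP[Eyx _]].
  by move: (tf x y xy); rewrite Exy Eyx.
- move=> x v z cw /andP[Exz _]; have /andP[Exv Evz] := ci x v z cw Exz.
  have {cw} /and4P[xv _ _ lt] := cw; have long := longest _ _ Exz.
  rewrite /remove_edge Exv Evz /=; apply/andP; split.
    by apply/negP => /andP[/eqP ex /eqP ev]; subst x v; lia.
  apply/negP => /andP[/eqP ev /eqP ez]; subst v z.
  have := cdist_lt x w; have := cdist_lt u w; rewrite -cdist_gt0 in xv.
  by case: (cdist_add x u w); lia.
Qed.
End Digraphs.

Definition is_P3 n (E : rel 'I_n) (t : 'I_n * 'I_n * 'I_n) : bool :=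
  [&& [&& t.1.1 != t.1.2, t.1.2 != t.2 & t.1.1 != t.2],
      E t.1.1 t.1.2, E t.1.2 t.2, ~~ E t.1.1 t.2 & ~~ E t.2 t.1.1].

Definition is_xi_pair n (E : rel 'I_n) (q : ('I_n * 'I_n) * ('I_n * 'I_n)) : bool :=
  [&& E q.1.1 q.1.2, nonedge E q.2.1 q.2.2 & cdist q.2.1 q.2.2 < cdist q.1.1 q.1.2].

Section RemoveLongestEdge.
Variables (n : nat) (E : rel 'I_n) (u w : 'I_n).
Hypothesis admE : admissible E.
Hypothesis longE : longest_edge E u w.

Local Notation k := (cdist u w).
Local Notation E' := (remove_edge E u w).

Let Euw : E u w. Proof. by case: longE. Qed.
Let longest x y : E x y -> cdist x y <= k. Proof. by case: longE => _; apply. Qed.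
Let ci : circ_interval E. Proof. by case: admE. Qed.

Let neq_uw : u != w.
Proof. by apply: contraTneq Euw => <-; case: admE => ll _ _; apply: ll. Qed.

Let nEwu : ~~ E w u.
Proof. by case: admE => _ tf _; move: (tf u w neq_uw); rewrite Euw. Qed.

Lemma beyond_edge v :
  v != u -> v != w -> ~~ (E u v && E v w) -> k < cdist u v.
Proof.
move=> vu vw; apply: contraR; rewrite -leqNgt leq_eqVlt => /orP[/eqP duv|duv].
  by rewrite (cdist_inj duv) eqxx in vw.
by apply: interior_adjacent => //; rewrite cdist_gt0 eq_sym vu.
Qed.

Definition other (t : 'I_n * 'I_n * 'I_n) : 'I_n := if t.1.1 == u then t.2 else t.1.1.

Lemma lost_P3_shape t : is_P3 E t -> ~~ is_P3 E' t ->
  k < cdist u (other t) /\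
  (E w (other t) /\ t = (u, w, other t) \/ ~~ E w (other t) /\ t = (other t, u, w)).
Proof.
case: t => [[a b] c]; rewrite /is_P3 /remove_edge /other /=.
move=> /and5P[/and3P[ab bc ac] Eab Ebc nEac nEca].
rewrite Eab Ebc ab bc ac (negbTE nEac) (negbTE nEca) !andbT -negb_or negbK.
case/orP=> [/andP[/eqP eq_au /eqP eq_bw]|/andP[/eqP eq_bu /eqP eq_cw]]; subst.
  rewrite eqxx; split; last by left; rewrite Ebc.
  by apply: beyond_edge; rewrite 1?eq_sym // (negbTE nEac).
rewrite (negbTE ab); split; last by right; rewrite nEca.
by apply: beyond_edge; rewrite // (negbTE nEac) andbF.
Qed.

Lemma gained_P3_interior j : 0 < j < k ->
  is_P3 E' (u, shift u j, w) && ~~ is_P3 E (u, shift u j, w).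
Proof.
move=> /andP[j_gt0 j_lt]; set b := shift u j.
have db : cdist u b = j by rewrite cdist_shift // (ltn_trans j_lt) ?cdist_lt.
have ub : u != b by rewrite -cdist_gt0 db.
have bw : b != w by apply: contraTneq j_lt => eq_bw; rewrite -db eq_bw ltnn.
have /andP[Eub Ebw] : E u b && E b w by apply: interior_adjacent; rewrite ?db ?j_gt0.
by rewrite /is_P3 /remove_edge /= ub bw neq_uw Eub Ebw Euw (negbTE nEwu)
  (eq_sym b u) (negbTE ub) (negbTE bw) !eqxx.
Qed.

Definition trade (t : 'I_n * 'I_n * 'I_n) : 'I_n * 'I_n * 'I_n :=
  (u, shift u (cdist u (other t) - k), w).

(* The trade remembers d(u,o), hence o. *)
Let trade_dist t : k < cdist u (other t) ->
  cdist u (trade t).1.2 = cdist u (other t) - k.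
Proof. by move=> lt; rewrite cdist_shift //; have := cdist_lt u (other t); lia. Qed.

(* When uw is at most half the circle, its deletion only creates non-edges
   (u,w) and (w,u) at least as long as every edge, so it never creates
   pairs counted by xi, and it destroys those pairing uw with a shorter
   non-edge. *)
Lemma xi_remove_lt a b :
  k.*2 <= n -> nonedge E a b -> cdist a b < k -> xi E' < xi E.
Proof.
move=> short_edge nEab ab_lt.
have dwu : cdist w u = n - k by have := cdist_opp neq_uw; lia.
apply: (@proper_card _ [pred q | is_xi_pair E' q] [pred q | is_xi_pair E q]).
apply/properP; split; last first.
  exists ((u, w), (a, b)); first by rewrite inE /is_xi_pair /= Euw nEab ab_lt.
  by rewrite inE /is_xi_pair /remove_edge /= !eqxx andbF.
apply/subsetP => -[[e1 e2] [f1 f2]]; rewrite !inE /is_xi_pair /nonedge /remove_edge /=.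
move=> /and3P[/andP[Ee _] /and3P[f12 nEf12 nEf21] lt]; rewrite Ee f12 lt /= andbT.
have long := longest Ee.
apply/andP; split; apply: contraL lt => Ef; rewrite -leqNgt.
  by move: nEf12; rewrite Ef negbK => /andP[/eqP -> /eqP ->].
by move: nEf21; rewrite Ef negbK => /andP[/eqP -> /eqP ->]; rewrite dwu; lia.
Qed.

Hypothesis half_circle : n <= k.*2.

(* Since d(u,o) - k < n - k <= k, the traded path runs inside uw. *)
Lemma trade_gained t : is_P3 E t -> ~~ is_P3 E' t ->
  is_P3 E' (trade t) && ~~ is_P3 E (trade t).
Proof.
move=> P3t nP3t; have [lt _] := lost_P3_shape P3t nP3t.
by apply: gained_P3_interior; have := cdist_lt u (other t); lia.
Qed.

(* o is recovered from the trade, and whether w -> o is an edge decides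
   which of the two shapes the lost path had. *)
Lemma trade_inj t1 t2 : is_P3 E t1 -> ~~ is_P3 E' t1 -> is_P3 E t2 -> ~~ is_P3 E' t2 ->
  trade t1 = trade t2 -> t1 = t2.
Proof.
move=> P1 nP1 P2 nP2 eq_t; have [lt1 sh1] := lost_P3_shape P1 nP1.
have [lt2 sh2] := lost_P3_shape P2 nP2.
have eq_o : other t1 = other t2.
  apply: (@cdist_inj _ u); move/(congr1 (fun t => cdist u t.1.2)): eq_t.
  by rewrite !trade_dist //; lia.
rewrite eq_o in sh1; move: (other t2) sh1 sh2 => o.
case=> [[E1 ->]|[E1 ->]] [[E2 ->]|[E2 ->]] //.
  by rewrite E1 in E2.
by rewrite E2 in E1.
Qed.

Lemma P3t_remove_ge : P3t E <= P3t E'.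
Proof.
apply: (@card_le_by_injection _ [pred t | is_P3 E t] [pred t | is_P3 E' t] trade).
  by move=> t1 t2; rewrite !inE => /andP[? ?] /andP[? ?]; apply: trade_inj.
by move=> t; rewrite !inE => /andP[? ?]; rewrite andbC trade_gained.
Qed.

Lemma P3t_remove_gt t : is_P3 E' t -> ~~ is_P3 E t ->
  (t.1.1 != u) || (n - k <= cdist u t.1.2) -> P3t E < P3t E'.
Proof.
move=> P3t' nP3t not_trade.
apply: (@card_lt_by_injection _ [pred t | is_P3 E t] [pred t | is_P3 E' t] trade _ _ t).
- by move=> t1 t2; rewrite !inE => /andP[? ?] /andP[? ?]; apply: trade_inj.
- by move=> s; rewrite !inE => /andP[? ?]; rewrite andbC trade_gained.
- by rewrite !inE P3t' nP3t.
move=> s; rewrite inE => /andP[nP3s P3s]; apply: contraTneq not_trade => <-.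
have [lt _] := lost_P3_shape P3s nP3s.
by rewrite /= eqxx /= -ltnNge trade_dist //; have := cdist_lt u (other s); lia.
Qed.

(* Beyond half the circle, the path through the vertex just before w is
   never a trade. *)
Lemma P3t_remove_gt_long : n < k.*2 -> P3t E < P3t E'.
Proof.
move=> long; have k_lt := cdist_lt u w.
have j_lt : k.-1 < n by lia.
have /andP[P3' nP3] := @gained_P3_interior k.-1 ltac:(lia).
by apply: (P3t_remove_gt P3' nP3); rewrite cdist_shift //; apply/orP; right; lia.
Qed.

(* At exactly half the circle, look at the vertex x just after w: either
   w -> x -> u becomes an induced path with w as its tail (so it is not a
   trade), or one of the pairs (w,x), (x,u) is a non-edge shorter than uw. *)
Lemma half_circle_improvable : 4 <= n -> k.*2 = n ->
  P3t E < P3t E' \/ exists a b, nonedge E a b && (cdist a b < k).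
Proof.
move=> n_ge4 half; set x := shift u k.+1.
have dux : cdist u x = k.+1 by rewrite cdist_shift //; lia.
have xu : x != u by rewrite eq_sym -cdist_gt0 dux.
have wx : w != x by apply: contra_eqN dux => /eqP <-; lia.
have dwx : cdist w x = 1.
  by have := cdist_lt w x; case: (cdist_add u w x); rewrite dux; lia.
have dxw : cdist x w = n.-1 by have := cdist_opp wx; lia.
have dxu : cdist x u = k.-1 by have := cdist_opp xu; lia.
have nEux : ~~ E u x by apply/negP => /longest; lia.
have nExw : ~~ E x w by apply/negP => /longest; lia.
case: (boolP (E x u && E w x)) => [/andP[Exu Ewx]|not_path].
  left; apply: (@P3t_remove_gt (w, x, u)); last by rewrite /= eq_sym neq_uw.
    by rewrite /is_P3 /remove_edge /= wx xu Exu Ewx Euw (eq_sym w u) (negbTE neq_uw)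
      (negbTE xu) (negbTE nEwu) !eqxx.
  by rewrite /is_P3 /= Euw !andbF.
right; case: (boolP (E x u)) => Exu.
  by exists w, x; move: not_path; rewrite /nonedge Exu wx nExw dwx /=; lia.
by exists x, u; rewrite /nonedge xu Exu (negbTE nEux) dxu /=; lia.
Qed.
End RemoveLongestEdge.

Theorem mainTheorem4 (n : nat) (hn : 4 <= n) (E : rel 'I_n) :
  optimal E -> (beta E).*2 < n.
Proof.
case=> admE P3_max xi_min.
case: (longest_edge_exists E) => [-> | [u [w [longE ->]]]]; first by lia.
rewrite ltnNge; apply/negP => half.
have admE' := remove_longest_admissible admE longE.
have no_P3_gain : ~ P3t E < P3t (remove_edge E u w).
  by have := P3_max _ admE'; lia.
case: (ltnP n (cdist u w).*2) => [long|short].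
  exact/no_P3_gain/(P3t_remove_gt_long admE longE half).
have eq_half : (cdist u w).*2 = n by lia.
have [//|[a [b /andP[nEab ab_lt]]]] := half_circle_improvable admE longE half hn eq_half.
have eq_P3 : P3t (remove_edge E u w) = P3t E.
  by have := P3t_remove_ge admE longE half; have := P3_max _ admE'; lia.
have := xi_min _ admE' eq_P3; have := xi_remove_lt admE longE short nEab ab_lt; lia.
Qed.
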